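(* Let $\Sigma$ be a finite set of tokens, $c$ a context, $M_1,M_2$ language models, and $f$ a min-bounded function. Then $$\overline{f_c}(M_1,M_2)\le\sqrt{MAE_c(M_1,M_2)}.$$
   Context: Let $n=|\Sigma|$. A context is a finite sequence of tokens from $\Sigma$. A language model $M$ assigns to every context $c$ and token $t\in\Sigma$ a probability $p_M(t\mid c)>0$, with $\sum_{t\in\Sigma}p_M(t\mid c)=1$. For $g:\Sigma\to\mathbb{R}_{>0}$, $GM(g(t)):=\exp\big(\tfrac1n\sum_{t\in\Sigma}\log g(t)\big)$. Typical probability: $tp_c(M):=GM(p_M(t\mid c))$; relative probability: $rp_M(t\mid c):=p_M(t\mid c)/tp_c(M)$. A function $f:\mathbb{R}_{>0}^2\to\mathbb{R}_{>0}$ is proper-avg if $\min(x,y)\le f(x,y)\le\max(x,y)$ for all $x,y>0$; it is min-bounded if it is proper-avg and there is a constant $\lambda_f$ with $f(x,y)\le\lambda_f\min(x,y)$ for all $x,y>0$. For such $f$, set $M(t\mid c):=f(rp_{M_1}(t\mid c),rp_{M_2}(t\mid c))$ and define $\overline{f_c}(M_1,M_2):=GM\big(M(t\mid c)^{-1}\big)$. The mean absolute exposure is $MAE_c(M_1,M_2):=GM\Big(\max\Big(\tfrac{rp_{M_1}(t\mid c)}{rp_{M_2}(t\mid c)},\tfrac{rp_{M_2}(t\mid c)}{rp_{M_1}(t\mid c)}\Big)\Big)$. *)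

From mathcomp Require Import all_boot all_order all_algebra.
From mathcomp Require Import reals sequences exp.
Set Implicit Arguments. Unset Strict Implicit. Unset Printing Implicit Defensive.
Import Order.TTheory GRing.Theory Num.Theory.
Local Open Scope ring_scope.

Section Defs.
Variable R : realType.
Variable T : finType.

Definition context := seq T.
Definition model := context -> T -> R.

Definition is_language_model (M : model) : Prop :=
  (forall c t, 0 < M c t) /\ (forall c, \sum_(t : T) M c t = 1).

Definition GM (g : T -> R) : R :=
  expR (#|T|%:R^-1 * \sum_(t : T) ln (g t)).

Definition tp (M : model) (c : context) : R := GM (fun t => M c t).
Definition rp (M : model) (c : context) (t : T) : R := M c t / tp M c.

Definition fbar (f : R -> R -> R) (M1 M2 : model) (c : context) : R :=
  GM (fun t => (f (rp M1 c t) (rp M2 c t))^-1).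

Definition MAE (M1 M2 : model) (c : context) : R :=
  GM (fun t => Num.max (rp M1 c t / rp M2 c t) (rp M2 c t / rp M1 c t)).
End Defs.

Definition proper_avg (R : realType) (f : R -> R -> R) : Prop :=
  forall x y : R, 0 < x -> 0 < y -> Num.min x y <= f x y <= Num.max x y.

Definition min_bounded (R : realType) (f : R -> R -> R) : Prop :=
  proper_avg f /\
  exists lam : R, forall x y : R, 0 < x -> 0 < y -> f x y <= lam * Num.min x y.

(* Write r1, r2 for the relative probabilities of the two models and
   m := min r1 r2.  Since f lies above the minimum (the only part of
   min-boundedness that is needed), the geometric mean of 1/f is at most
   GM (1/m).  On the other hand
   max (r1/r2, r2/r1) = r1 r2 / m^2, the geometric mean is multiplicative
   and relative probabilities have geometric mean 1, so the mean absolute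
   exposure is exactly GM (1/m)^2. *)
From mathcomp Require Import all_boot all_order all_algebra.
From mathcomp Require Import reals sequences exp.
From mathcomp Require Import ring.
Set Implicit Arguments. Unset Strict Implicit. Unset Printing Implicit Defensive.
Import Order.TTheory GRing.Theory Num.Theory.
Local Open Scope ring_scope.

Lemma max_ratio_min (R : realType) (x y : R) : 0 < x -> 0 < y ->
  Num.max (x / y) (y / x) = x * y * ((Num.min x y)^-1 * (Num.min x y)^-1).
Proof.
move=> x_gt0 y_gt0; have [x0 y0] := (lt0r_neq0 x_gt0, lt0r_neq0 y_gt0).
have [le_xy | lt_yx] := leP x y.
- rewrite (max_idPr _); first by field.
  by rewrite ler_pdivrMr // mulrAC ler_pdivlMr //; apply: ler_pM => //; apply: ltW.
- rewrite (max_idPl _); first by field.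
  by rewrite ler_pdivrMr // mulrAC ler_pdivlMr //; apply: ler_pM => //; apply: ltW.
Qed.

Section GeometricMean.
Variables (R : realType) (T : finType).
Implicit Types g h : T -> R.

Lemma GM_gt0 g : 0 < GM g.
Proof. exact: expR_gt0. Qed.

Lemma eq_GM g h : g =1 h -> GM g = GM h.
Proof. by move=> eq_gh; rewrite /GM; under eq_bigr => t _ do rewrite eq_gh. Qed.

Lemma ler_GM g h : (forall t, 0 < g t) -> (forall t, g t <= h t) ->
  GM g <= GM h.
Proof.
move=> g_gt0 le_gh; rewrite /GM ler_expR ler_wpM2l ?invr_ge0 //.
apply: ler_sum => t _; rewrite ler_ln ?posrE //.
exact: lt_le_trans (g_gt0 t) (le_gh t).
Qed.

Lemma GMM g h : (forall t, 0 < g t) -> (forall t, 0 < h t) ->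
  GM (fun t => g t * h t) = GM g * GM h.
Proof.
move=> g_gt0 h_gt0; rewrite /GM -expRD -mulrDr -big_split /=.
by under eq_bigr => t _ do rewrite lnM ?posrE //.
Qed.

Lemma GM_divGM g : (forall t, 0 < g t) -> GM (fun t => g t / GM g) = 1.
Proof.
move=> g_gt0; rewrite /GM.
under eq_bigr => t _ do rewrite ln_div ?posrE ?expR_gt0 // expRK.
have [T0 | T_gt0] := posnP #|T|; first by rewrite T0 invr0 mul0r expR0.
have nVn : #|T|%:R^-1 *+ #|T| = 1 :> R.
  by rewrite -[LHS]mulr_natl mulfV // pnatr_eq0 -lt0n.
by rewrite sumrB sumr_const -mulrnAl nVn mul1r subrr mulr0 expR0.
Qed.

Lemma GM_max_ratio g h : (forall t, 0 < g t) -> (forall t, 0 < h t) ->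
    GM g = 1 -> GM h = 1 ->
  GM (fun t => Num.max (g t / h t) (h t / g t)) =
  GM (fun t => (Num.min (g t) (h t))^-1) ^+ 2.
Proof.
move=> g_gt0 h_gt0 GMg GMh.
have minV_gt0 t : 0 < (Num.min (g t) (h t))^-1 by rewrite invr_gt0 lt_min g_gt0 h_gt0.
have GMgh : GM (fun t => g t * h t) = 1 by rewrite GMM // GMg GMh mulr1.
rewrite (eq_GM (fun t => max_ratio_min (g_gt0 t) (h_gt0 t))) GMM ?GMgh ?mul1r ?GMM //.
all: by move=> t; rewrite mulr_gt0 ?g_gt0 ?h_gt0 ?minV_gt0.
Qed.

End GeometricMean.

Section RelativeProbability.
Variables (R : realType) (T : finType) (M : model R T) (c : context T).
Hypothesis M_lm : is_language_model M.

Lemma rp_gt0 t : 0 < rp M c t.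
Proof. by case: M_lm => M_gt0 _; rewrite divr_gt0 ?GM_gt0. Qed.

Lemma GM_rp : GM (rp M c) = 1.
Proof. by case: M_lm => M_gt0 _; apply: GM_divGM. Qed.

End RelativeProbability.

Theorem lemma3 (R : realType) (T : finType) (c : context T)
  (M1 M2 : model R T) (f : R -> R -> R) :
  is_language_model M1 -> is_language_model M2 -> min_bounded f ->
  fbar f M1 M2 c <= Num.sqrt (MAE M1 M2 c).
Proof.
move=> M1_lm M2_lm [f_avg _].
have r1_gt0 := rp_gt0 c M1_lm; have r2_gt0 := rp_gt0 c M2_lm.
rewrite /MAE GM_max_ratio ?GM_rp // sqrtr_sqr ger0_norm ?(ltW (GM_gt0 _)) //.
have min_gt0 t : 0 < Num.min (rp M1 c t) (rp M2 c t).
  by rewrite lt_min r1_gt0 r2_gt0.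
have min_le_f t : Num.min (rp M1 c t) (rp M2 c t) <= f (rp M1 c t) (rp M2 c t).
  by case/andP: (f_avg _ _ (r1_gt0 t) (r2_gt0 t)).
rewrite /fbar; apply: ler_GM => t.
- by rewrite invr_gt0 (lt_le_trans (min_gt0 t)).
- by rewrite lef_pV2 ?posrE ?(lt_le_trans (min_gt0 t)).
Qed.
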